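(* Let $T\to T'$ be a homomorphism of unital rings, where both $T$ and $T'$ are commutative domains in which $2$ is not a zero divisor and in which the images of all affine roots in $\widehat X\otimes T$ (resp. $\widehat X\otimes T'$) are nonzero. Then for every sequence ${\mathbf s}$ in $\widehat{\mathcal S}$ the canonical isomorphism $\big(\bigoplus_{\sigma\in I({\mathbf s})}S_T\big)\otimes_TT'=\bigoplus_{\sigma\in I({\mathbf s})}S_{T'}$ identifies ${\mathcal X}_T({\mathbf s})\otimes_TT'$ with ${\mathcal X}_{T'}({\mathbf s})$.
   Context: $R$ irreducible reduced finite root system (positive roots $R^+$, simple roots $\Pi$, highest root $\gamma$); $\widehat X=X\oplus\mathbb Z$, $\delta=(0,-1)$, affine roots $\alpha+n\delta$. $\widehat{\mathcal W}$ generated by $s_{\alpha,n}(v,m)=(v-(\langle\alpha,v\rangle-mn)\alpha^\vee,m)$, acting contragrediently on $\widehat X$; $\widehat{\mathcal S}=\{s_{\alpha,0}:\alpha\in\Pi\}\cup\{s_{\gamma,1}\}$ with simple affine roots $\alpha$ resp. $-\gamma+\delta$. For such a ring $T$: $S_T$ = symmetric algebra of $\widehat X\otimes T$. For ${\mathbf s}=(s_1,\dots,s_l)$: $I({\mathbf s})$ = strictly increasing tuples in $\{1,\dots,l\}$, $\operatorname{ev}(i_1,\dots,i_n)=s_{i_1}\cdots s_{i_n}$; ${\mathbf s}'=(s_1,\dots,s_{l-1})$, $I({\mathbf s})=I({\mathbf s}')\sqcup I({\mathbf s}')s_l$ (appending $l$); $\Delta(z)_\gamma=\Delta(z)_{\gamma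 s_l}=z_\gamma$; $c^\lambda$ multiplies the $\sigma$-component by $\operatorname{ev}(\sigma)(\lambda)\otimes1$; $\alpha_l$ the simple affine root of $s_l$. ${\mathcal X}_T(\emptyset)=S_T$, ${\mathcal X}_T({\mathbf s})=\Delta({\mathcal X}_T({\mathbf s}'))+c^{\alpha_l}(\Delta({\mathcal X}_T({\mathbf s}')))\subset\bigoplus_{\sigma\in I({\mathbf s})}S_T$. *)

From HB Require Import structures.
From mathcomp Require Import all_boot all_order all_algebra.
From mathcomp Require Import mpoly.
Set Implicit Arguments. Unset Strict Implicit. Unset Printing Implicit Defensive.
Import Order.TTheory GRing.Theory Num.Theory.
Local Open Scope ring_scope.

(* Lattices.  X = Z^r (row vectors), its dual lattice Y = Z^r with the  *)
(* standard pairing; Xhat = X (+) Z, elements (lambda, k).             *)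

Definition pairing (r : nat) (x v : 'rV[int]_r) : int := \sum_(i < r) x 0 i * v 0 i.

Definition Xhat (r : nat) := ('rV[int]_r * int)%type.

(* delta = (0,-1); affine root alpha + n delta = (alpha, -n) *)
Definition aff_root (r : nat) (a : 'rV[int]_r) (n : int) : Xhat r := (a, - n).

Section RootSystem.
Variables (r : nat) (roots : seq 'rV[int]_r) (coroot : 'rV[int]_r -> 'rV[int]_r).

Definition refl (a b : 'rV[int]_r) : 'rV[int]_r := b - pairing b (coroot a) *: a.

Definition is_irred_reduced_root_system : Prop :=
  (  [/\ uniq roots, (0 : 'rV[int]_r) \notin roots & roots != [::]] /\
      {in roots, forall a, pairing a (coroot a) = 2} /\
      {in roots &, forall a b, refl a b \in roots} /\
      {in roots &, forall a b,
          coroot (refl a b) = coroot b - pairing a (coroot b) *: coroot a} /\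
      {in roots &, injective coroot} /\
      {in roots &, forall a b, forall m k : int, m != 0 -> m *: b = k *: a ->
          b = a \/ b = - a} /\
      (* irreducible: no partition into two mutually orthogonal parts *)
      forall P : pred 'rV[int]_r,
        {in roots &, forall a b, P a -> ~~ P b -> pairing b (coroot a) = 0} ->
        all P roots \/ all (predC P) roots).

Variable simple : seq 'rV[int]_r.

Definition int_comb (x : 'rV[int]_r) (c : 'I_(size simple) -> int) :=
  x = \sum_(i < size simple) c i *: simple`_i.

Definition nonneg_comb (x : 'rV[int]_r) :=
  exists c, int_comb x c /\ forall i, 0 <= c i.

Definition is_base : Prop :=
  [/\ all (mem roots) simple, uniq simple,
      forall c, int_comb 0 c -> forall i, c i = 0 &
      {in roots, forall a, exists c, int_comb a c /\
          ((forall i, 0 <= c i) \/ (forall i, c i <= 0))}].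

Definition positive_root (a : 'rV[int]_r) := a \in roots /\ nonneg_comb a.

Definition is_highest_root (g : 'rV[int]_r) : Prop :=
  positive_root g /\ {in roots, forall a, nonneg_comb (g - a)}.

Variable gamma : 'rV[int]_r.

(* Elements s_{alpha,n} are encoded by pairs (alpha, n). *)
Definition in_Shat (p : 'rV[int]_r * int) : bool :=
  ((p.2 == 0) && (p.1 \in simple)) || (p == (gamma, 1)).

(* simple affine root of an element of Shat: alpha for s_{alpha,0},
   -gamma + delta for s_{gamma,1} *)
Definition simple_aff_root (p : 'rV[int]_r * int) : Xhat r :=
  if p == (gamma, 1) then (- gamma, -1) else (p.1, 0).

(* contragredient action of s_{alpha,n} on Xhat:
   (lambda,k) |-> (lambda,k) - <lambda,alpha^v> (alpha - n delta) *)
Definition saff (p : 'rV[int]_r * int) (x : Xhat r) : Xhat r :=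
  let c := pairing x.1 (coroot p.1) in (x.1 - c *: p.1, x.2 - c * p.2).

Section Ring.
Variable T : comNzRingType.

(* Xhat (x) T = T^(r+1) *)
Definition tens (x : Xhat r) : 'rV[T]_(r + 1) :=
  row_mx (map_mx (fun z : int => z%:~R) x.1) (\row_(j < 1) (x.2)%:~R).

(* S_T = symmetric algebra of Xhat (x) T = polynomial ring in r+1 variables *)
Definition S_T := {mpoly T[r + 1]}.

Definition toS (v : 'rV[T]_(r + 1)) : S_T := \sum_(i < r + 1) v 0 i *: 'X_i.

Variable s : seq ('rV[int]_r * int).

(* direct sum over I(s_1..s_k), strictly increasing tuples in {1..k},
   encoded as subsets of 'I_k (position i <-> s_(i+1)) *)
Definition DS (k : nat) := {ffun {set 'I_k} -> S_T}.

Definition ev (k : nat) (sigma : {set 'I_k}) (x : Xhat r) : Xhat r :=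
  foldr (fun i acc => saff (nth (0, 0) s (val i)) acc) x (enum sigma).

Definition Delta (k : nat) (z : DS k) : DS k.+1 :=
  [ffun sigma : {set 'I_k.+1} =>
     z [set i : 'I_k | widen_ord (leqnSn k) i \in sigma]].

Definition cmul (k : nat) (lam : Xhat r) (z : DS k) : DS k :=
  [ffun sigma => toS (tens (ev sigma lam)) * z sigma].

Definition DSadd (k : nat) (z w : DS k) : DS k := [ffun sigma => z sigma + w sigma].

Fixpoint Xpref (k : nat) : DS k -> Prop :=
  match k return DS k -> Prop with
  | 0 => fun _ => True
  | k'.+1 => fun f => exists x y, Xpref x /\ Xpref y /\
      f = DSadd (Delta x)
                (cmul (simple_aff_root (nth (0, 0) s k')) (Delta y))
  end.

Definition XT : DS (size s) -> Prop := @Xpref (size s).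

End Ring.

Section BaseChange.
Variables (T T' : comNzRingType) (phi : {rmorphism T -> T'}).
Variable s : seq ('rV[int]_r * int).
Let F := DS T (size s).
Let F' := DS T' (size s).

(* canonical map (+) S_T (x)_T T' -> (+) S_T', on a formal sum
   sum_j m_j (x) t_j *)
Definition canon (t : seq (F * T')) : F' :=
  \big[@DSadd T' (size s)/[ffun => 0]]_(p <- t)
     [ffun sigma => p.2 *: map_mpoly phi (p.1 sigma)].

(* M (x)_T T' = free T'-module on the set M modulo the T'-span of the
   relations [m + m'] - [m] - [m'] and [a m] - phi(a) [m].  Formal
   T'-combinations of elements of F are lists; coefficient at x: *)
Definition fcoef (t : seq (F * T')) (x : F) : T' :=
  \sum_(p <- t | p.1 == x) p.2.

Definition rel_add (m m' : F) : seq (F * T') :=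
  [:: (DSadd m m', 1); (m, -1); (m', -1)].

Definition rel_scal (a : T) (m : F) : seq (F * T') :=
  [:: ([ffun sigma => a *: m sigma], 1); (m, - phi a)].

Definition is_rel (M : F -> Prop) (g : seq (F * T')) : Prop :=
  (exists m m', [/\ M m, M m' & g = rel_add m m']) \/
  (exists a m, M m /\ g = rel_scal a m).

Definition tensor_zero (M : F -> Prop) (t : seq (F * T')) : Prop :=
  exists rels : seq (T' * seq (F * T')),
    (forall q, q \in rels -> is_rel M q.2) /\
    forall x, fcoef t x = \sum_(q <- rels) q.1 * fcoef q.2 x.

End BaseChange.
End RootSystem.

Definition aff_roots_nonzero (r : nat) (roots : seq 'rV[int]_r) (T : comNzRingType) :=
  {in roots, forall a, forall n : int, tens T (aff_root a n) != 0}.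

Definition two_nzd (T : comNzRingType) := forall x : T, 2 * x = 0 -> x = 0.

From HB Require Import structures.
From mathcomp Require Import all_boot all_order all_algebra.
From mathcomp Require Import mpoly.
From mathcomp Require Import ring.
Import Order.TTheory GRing.Theory Num.Theory.
Local Open Scope ring_scope.
Set Implicit Arguments. Unset Strict Implicit. Unset Printing Implicit Defensive.

(* X_T(s) is the image of a T-linear endomorphism Xparam of the direct sum: it is defined by
   the recursion of X_T(s) with the two summands parametrized independently.  Xparam commutes
   with base change, so the canonical map sends X_T(s) (x) T' onto the image of Xparam over T',
   which is X_T'(s).  When T' is a domain in which 2 is not a zero divisor and affine roots are
   nonzero, Xparam is injective over T': at the indices sigma and sigma s_l its components are
   X + a Y and X - a Y with a = ev(sigma)(alpha_l) <> 0, because s_l negates alpha_l.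
   Written in terms of the Xparam-images of monomials, an element of X_T(s) (x) T' is sent by
   the canonical map to Xparam of its coefficient vector; injectivity makes that vector zero,
   so the element is zero modulo the tensor relations. *)

Section IndexSets.
Variable k : nat.

Definition restr_set (sg : {set 'I_k.+1}) : {set 'I_k} :=
  [set i : 'I_k | widen_ord (leqnSn k) i \in sg].
Definition widen_set (t : {set 'I_k}) : {set 'I_k.+1} := widen_ord (leqnSn k) @: t.
Definition widen_set_max (t : {set 'I_k}) : {set 'I_k.+1} := ord_max |: widen_set t.

Lemma widen_ord_max_inj : injective (widen_ord (leqnSn k)).
Proof. by move=> i j /(congr1 val) /= /val_inj. Qed.

Lemma widen_ord_neq_max (i : 'I_k) : widen_ord (leqnSn k) i != ord_max.
Proof. by rewrite -val_eqE /= neq_ltn ltn_ord. Qed.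

Lemma ordS_split (j : 'I_k.+1) : j = ord_max \/ exists i, j = widen_ord (leqnSn k) i.
Proof.
case: (unliftP ord_max j) => [i ->|->]; last by left.
by right; exists i; apply/eqP; rewrite -val_eqE /= /bump leqNgt ltn_ord.
Qed.

Lemma mem_widen_set t i : (widen_ord (leqnSn k) i \in widen_set t) = (i \in t).
Proof. exact/mem_imset/widen_ord_max_inj. Qed.

Lemma max_notin_widen_set t : ord_max \notin widen_set t.
Proof. by apply/imsetP => -[i _ /eqP]; rewrite eq_sym (negbTE (widen_ord_neq_max i)). Qed.

Lemma restr_widen_set t : restr_set (widen_set t) = t.
Proof. by apply/setP => i; rewrite inE mem_widen_set. Qed.

Lemma restr_widen_set_max t : restr_set (widen_set_max t) = t.
Proof. by apply/setP => i; rewrite inE in_setU1 (negbTE (widen_ord_neq_max i)) mem_widen_set. Qed.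

Lemma restr_setK (sg : {set 'I_k.+1}) :
  sg = if ord_max \in sg then widen_set_max (restr_set sg) else widen_set (restr_set sg).
Proof.
apply/setP => j; case: ifP => Hmax; rewrite ?in_setU1;
  case: (ordS_split j) => [->|[i ->]];
  by rewrite ?eqxx ?Hmax ?(negbTE (max_notin_widen_set _)) ?(negbTE (widen_ord_neq_max i))
             ?mem_widen_set ?inE.
Qed.

Lemma val_enum_set (A : {set 'I_k}) (q : pred nat) :
  (forall j : 'I_k, q (val j) = (j \in A)) -> map val (enum A) = filter q (iota 0 k).
Proof.
move=> Hq; rewrite /enum_mem -enumT -val_enum_ord filter_map.
by congr map; apply: eq_filter => j /=; rewrite /preim /= Hq.
Qed.

End IndexSets.

Lemma mem_val_enum k (A : {set 'I_k}) (j : 'I_k) : (val j \in map val (enum A)) = (j \in A).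
Proof. by rewrite (mem_map val_inj) mem_enum. Qed.

Lemma max_notin_val_enum k (A : {set 'I_k}) : k \notin map val (enum A).
Proof. by apply/mapP => -[i _ Ek]; have := ltn_ord i; rewrite -Ek ltnn. Qed.

Lemma val_enum_widen_set k (t : {set 'I_k}) :
  map val (enum (widen_set t)) = map val (enum t).
Proof.
pose q : pred nat := fun i => i \in map val (enum t).
rewrite (@val_enum_set _ _ q); last first.
  move=> j; case: (ordS_split j) => [->|[i ->]].
    by rewrite (negbTE (max_notin_widen_set _)); apply/negbTE/max_notin_val_enum.
  by rewrite mem_widen_set /q /= mem_val_enum.
rewrite -addn1 iotaD filter_cat /= add0n /q (negbTE (max_notin_val_enum t)) cats0.
by apply/esym/val_enum_set => j; rewrite mem_val_enum.
Qed.

Lemma val_enum_widen_set_max k (t : {set 'I_k}) :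
  map val (enum (widen_set_max t)) = rcons (map val (enum t)) k.
Proof.
pose q : pred nat := fun i => i \in map val (enum t).
rewrite (@val_enum_set _ _ (fun i => (i == k) || q i)); last first.
  move=> j; rewrite in_setU1; case: (ordS_split j) => [->|[i ->]] /=.
    by rewrite !eqxx.
  by rewrite (negbTE (widen_ord_neq_max i)) mem_widen_set /q /= mem_val_enum /= ltn_eqF.
rewrite -addn1 iotaD filter_cat /= add0n eqxx -cats1; congr (_ ++ _).
rewrite (@val_enum_set _ _ q) => [|j]; last exact: mem_val_enum.
apply: eq_in_filter => i; rewrite mem_iota add0n => /andP [_ ik].
by rewrite /= (ltn_eqF ik).
Qed.

Section Evaluation.
Variables (r : nat) (coroot : 'rV[int]_r -> 'rV[int]_r) (s : seq ('rV[int]_r * int)).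

Lemma evE k (sg : {set 'I_k}) x :
  ev coroot s sg x = foldr (fun n => saff coroot (nth (0, 0) s n)) x (map val (enum sg)).
Proof. by rewrite foldr_map. Qed.

Lemma ev_widen_set k (t : {set 'I_k}) x : ev coroot s (widen_set t) x = ev coroot s t x.
Proof. by rewrite !evE val_enum_widen_set. Qed.

Lemma ev_widen_set_max k (t : {set 'I_k}) x :
  ev coroot s (widen_set_max t) x = ev coroot s t (saff coroot (nth (0, 0) s k) x).
Proof. by rewrite !evE val_enum_widen_set_max foldr_rcons. Qed.

End Evaluation.

Section Parametrization.
Variables (r : nat) (coroot : 'rV[int]_r -> 'rV[int]_r) (gamma : 'rV[int]_r).
Variables (s : seq ('rV[int]_r * int)) (T : comNzRingType).

(* An element of DS k.+1 is a pair of elements of DS k: its components at the index sets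
   without and with the last index, i.e. at sigma and sigma s_l for sigma in I(s'). *)
Definition lo_part k (u : DS r T k.+1) : DS r T k := [ffun t => u (widen_set t)].
Definition hi_part k (u : DS r T k.+1) : DS r T k := [ffun t => u (widen_set_max t)].
Definition glue k (u v : DS r T k) : DS r T k.+1 :=
  [ffun sg : {set 'I_k.+1} => if ord_max \in sg then v (restr_set sg) else u (restr_set sg)].

Lemma lo_glue k (u v : DS r T k) : lo_part (glue u v) = u.
Proof. by apply/ffunP => t; rewrite !ffunE (negbTE (max_notin_widen_set _)) restr_widen_set. Qed.

Lemma hi_glue k (u v : DS r T k) : hi_part (glue u v) = v.
Proof. by apply/ffunP => t; rewrite !ffunE setU11 restr_widen_set_max. Qed.

Definition simple_aff_root_at k := simple_aff_root gamma (nth (0, 0) s k).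

Fixpoint Xparam k : DS r T k -> DS r T k :=
  match k with
  | 0 => id
  | k'.+1 => fun u => DSadd (Delta (Xparam (lo_part u)))
      (cmul coroot s (simple_aff_root_at k') (Delta (Xparam (hi_part u))))
  end.

Lemma XparamE k (u : DS r T k.+1) sg :
  Xparam u sg = Xparam (lo_part u) (restr_set sg)
    + toS (tens T (ev coroot s sg (simple_aff_root_at k))) * Xparam (hi_part u) (restr_set sg).
Proof. by rewrite /= !ffunE. Qed.

Lemma Xparam_is_linear k : linear (@Xparam k).
Proof.
elim: k => [//|k IH] a u v; apply/ffunP => sg.
have lo_lin : lo_part (a *: u + v) = a *: lo_part u + lo_part v.
  by apply/ffunP => t; rewrite !ffunE.
have hi_lin : hi_part (a *: u + v) = a *: hi_part u + hi_part v.
  by apply/ffunP => t; rewrite !ffunE.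
rewrite XparamE [RHS]ffunE [in RHS]ffunE !XparamE lo_lin hi_lin !IH !ffunE.
by rewrite mulrDr scalerDr scalerAr; ring.
Qed.

Lemma Xpref_Xparam k (m : DS r T k) : Xpref coroot gamma s m <-> exists u, m = Xparam u.
Proof.
elim: k m => [|k IH] m /=; first by split => // _; exists m.
split => [[x [y [/IH [u ->] [/IH [v ->] ->]]]]|[u ->]].
  by exists (glue u v); rewrite lo_glue hi_glue.
by exists (Xparam (lo_part u)), (Xparam (hi_part u)); split; [|split]; try apply/IH; eexists.
Qed.

End Parametrization.

HB.instance Definition _ r coroot gamma s (T : comNzRingType) k :=
  GRing.isLinear.Build T (DS r T k) (DS r T k) _ (@Xparam r coroot gamma s T k)
    (@Xparam_is_linear r coroot gamma s T k).

Lemma two_nzd_mpoly (T : comNzRingType) n : two_nzd T -> two_nzd {mpoly T[n]}.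
Proof.
move=> H2 p p2; apply/mpolyP => m; rewrite mcoeff0; apply: H2.
by rewrite mulr_natl -mcoeffMn -mulr_natl p2 mcoeff0.
Qed.

Lemma addr_subr_eq0 (R : idomainType) (a x y : R) : two_nzd R -> a != 0 ->
  x + a * y = 0 -> x - a * y = 0 -> x = 0 /\ y = 0.
Proof.
move=> H2 a0 Ep Em.
have ay0 : a * y = 0.
  apply: H2; have -> : 2 * (a * y) = (x + a * y) - (x - a * y) by ring.
  by rewrite Ep Em subrr.
have y0 : y = 0 by apply/eqP; move/eqP: ay0; rewrite mulf_eq0 (negbTE a0).
by move: Ep; rewrite y0 mulr0 addr0.
Qed.

Lemma pairingN r (x v : 'rV[int]_r) : pairing (- x) v = - pairing x v.
Proof. by rewrite /pairing -sumrN; apply: eq_bigr => i _; rewrite mxE mulNr. Qed.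

Lemma saffN r coroot p (x : Xhat r) : saff coroot p (- x) = - saff coroot p x.
Proof.
rewrite /saff /= pairingN scaleNr mulNr.
by congr pair; rewrite opprD opprK.
Qed.

Lemma evN r coroot s k (sg : {set 'I_k}) (x : Xhat r) :
  ev coroot s sg (- x) = - ev coroot s sg x.
Proof. by rewrite !evE; elim: (map val _) => //= n l ->; rewrite saffN. Qed.

Lemma tensN (T : comNzRingType) r (x : Xhat r) : tens T (- x) = - tens T x.
Proof. by rewrite /tens opp_row_mx; congr row_mx; apply/matrixP => i j; rewrite !mxE intrN. Qed.

Lemma toSN (T : comNzRingType) r (v : 'rV[T]_(r + 1)) : toS (- v) = - toS v.
Proof. by rewrite /toS -sumrN; apply: eq_bigr => i _; rewrite mxE scaleNr. Qed.

Lemma mcoeff_toS (T : comNzRingType) r (v : 'rV[T]_(r + 1)) i : (toS v)@_U_(i) = v 0 i.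
Proof.
rewrite /toS raddf_sum (bigD1 i) //= mcoeffZ mcoeffXU eqxx mulr1 big1 ?addr0 //.
by move=> j /negbTE ji; rewrite mcoeffZ mcoeffXU ji mulr0.
Qed.

Lemma toS_eq0 (T : comNzRingType) r (v : 'rV[T]_(r + 1)) : (toS v == 0) = (v == 0).
Proof.
apply/eqP/eqP => [v0|->]; last by rewrite /toS big1 // => i _; rewrite mxE scale0r.
by apply/rowP => i; rewrite -mcoeff_toS v0 mcoeff0 mxE.
Qed.

Section Injectivity.
Variables (r : nat) (roots : seq 'rV[int]_r) (coroot : 'rV[int]_r -> 'rV[int]_r).
Variables (gamma : 'rV[int]_r) (s : seq ('rV[int]_r * int)) (T : idomainType).
Hypothesis s_roots : forall p, p \in s -> p.1 \in roots.
Hypothesis refl_roots : {in roots &, forall a b, refl coroot a b \in roots}.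
Hypothesis simple_aff_root_roots : forall p, p \in s -> (simple_aff_root gamma p).1 \in roots.
Hypothesis saff_simple_aff_root :
  forall p, p \in s -> saff coroot p (simple_aff_root gamma p) = - simple_aff_root gamma p.
Hypothesis Haff : aff_roots_nonzero roots T.
Hypothesis H2 : two_nzd T.

Lemma ev_roots k (sg : {set 'I_k}) (x : Xhat r) : (k <= size s)%N ->
  x.1 \in roots -> (ev coroot s sg x).1 \in roots.
Proof.
move=> ks x_root; rewrite evE.
have : all (fun n => n < size s)%N (map val (enum sg)).
  by apply/allP => n /mapP [j _ ->]; exact: leq_trans (ltn_ord j) ks.
elim: (map val _) => //= n l IH /andP [ns /IH l_root].
exact: refl_roots (s_roots (mem_nth _ ns)) l_root.
Qed.

Lemma ev_simple_aff_root_neq0 k (sg : {set 'I_k}) : (k < size s)%N ->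
  toS (tens T (ev coroot s sg (simple_aff_root_at gamma s k))) != 0.
Proof.
move=> ks; rewrite toS_eq0; set x := ev coroot s sg _.
have x_root : x.1 \in roots by apply: ev_roots (ltnW ks) (simple_aff_root_roots (mem_nth _ ks)).
by have := Haff x_root (- x.2); rewrite /aff_root opprK -surjective_pairing.
Qed.

Lemma ev_widen_set_max_simple_aff_root k (t : {set 'I_k}) : (k < size s)%N ->
  ev coroot s (widen_set_max t) (simple_aff_root_at gamma s k) =
  - ev coroot s (widen_set t) (simple_aff_root_at gamma s k).
Proof.
by move=> ks; rewrite ev_widen_set_max ev_widen_set saff_simple_aff_root ?mem_nth // evN.
Qed.

Lemma Xparam_eq0 k (u : DS r T k) : (k <= size s)%N ->
  Xparam coroot gamma s u = 0 -> u = 0.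
Proof.
elim: k u => [//|k IH] u ks u0.
have parts0 t : Xparam coroot gamma s (lo_part u) t = 0 /\
                Xparam coroot gamma s (hi_part u) t = 0.
  have Ep := XparamE coroot gamma s u (widen_set t).
  have Em := XparamE coroot gamma s u (widen_set_max t).
  rewrite u0 ffunE restr_widen_set ev_widen_set in Ep.
  rewrite u0 ffunE restr_widen_set_max ev_widen_set_max_simple_aff_root // in Em.
  rewrite ev_widen_set tensN toSN mulNr in Em.
  have S_two_nzd : two_nzd {mpoly T[r + 1]} := two_nzd_mpoly H2.
  exact: (@addr_subr_eq0 {mpoly T[r + 1]} _ _ _ S_two_nzd
    (ev_simple_aff_root_neq0 t ks) (esym Ep) (esym Em)).
have lo0 : lo_part u = 0.
  by apply: IH (ltnW ks) _; apply/ffunP => t; rewrite ffunE; case: (parts0 t).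
have hi0 : hi_part u = 0.
  by apply: IH (ltnW ks) _; apply/ffunP => t; rewrite ffunE; case: (parts0 t).
apply/ffunP => sg; rewrite ffunE (restr_setK sg).
by case: ifP => _; [move/ffunP: hi0 | move/ffunP: lo0] => /(_ (restr_set sg)); rewrite !ffunE.
Qed.

End Injectivity.

Section BaseChange.
Variables (r : nat) (T T' : comNzRingType) (phi : {rmorphism T -> T'}).

Definition mapDS k (u : DS r T k) : DS r T' k := [ffun sg => map_mpoly phi (u sg)].

Lemma tens_map (x : Xhat r) : tens T' x = map_mx phi (tens T x).
Proof.
by rewrite /tens map_row_mx; congr row_mx; apply/matrixP => i j; rewrite !mxE rmorph_int.
Qed.

Lemma map_toS_tens (x : Xhat r) : map_mpoly phi (toS (tens T x)) = toS (tens T' x).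
Proof.
rewrite /toS raddf_sum tens_map; apply: eq_bigr => i _.
change (map_mpoly phi (tens T x 0 i *: 'X_i) = (tens T x ^ phi)%sesqui 0 i *: 'X_i).
by rewrite map_mpolyZ (map_mpolyX phi); congr (_ *: _); rewrite [RHS]mxE.
Qed.

Lemma map_Xparam coroot gamma s k (u : DS r T k) :
  mapDS (Xparam coroot gamma s u) = Xparam coroot gamma s (mapDS u).
Proof.
elim: k u => [//|k IH] u; apply/ffunP => sg.
have lo_map : lo_part (mapDS u) = mapDS (lo_part u) by apply/ffunP => t; rewrite !ffunE.
have hi_map : hi_part (mapDS u) = mapDS (hi_part u) by apply/ffunP => t; rewrite !ffunE.
by rewrite ffunE !XparamE rmorphD rmorphM -map_toS_tens lo_map hi_map -!IH !ffunE.
Qed.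

Lemma canonE s (t : seq (DS r T (size s) * T')) : canon phi t = \sum_(p <- t) p.2 *: mapDS p.1.
Proof.
rewrite /canon; elim: t => [|p t IH]; first by rewrite !big_nil; apply/ffunP => sg; rewrite !ffunE.
by rewrite !big_cons IH; apply/ffunP => sg; rewrite !ffunE.
Qed.

End BaseChange.

Definition ds_monomial (T : comNzRingType) r k (b : {set 'I_k} * 'X_{1..r + 1}) : DS r T k :=
  [ffun sg => if sg == b.1 then 'X_[b.2] else 0].

Lemma ds_monomial_expansion (T : comNzRingType) r k (u : DS r T k)
    (B : seq ({set 'I_k} * 'X_{1..r + 1})) :
  uniq B -> (forall sg m, m \in msupp (u sg) -> (sg, m) \in B) ->
  u = \sum_(b <- B) (u b.1)@_b.2 *: ds_monomial T b.
Proof.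
move=> uB suppB; apply/ffunP => sg; rewrite sum_ffunE; apply/mpolyP => m.
rewrite raddf_sum.
have coef_b (b : {set 'I_k} * 'X_{1..r + 1}) :
    (((u b.1)@_b.2 *: ds_monomial T b) sg)@_m = if b == (sg, m) then (u sg)@_m else 0.
  case: b => b1 b2; rewrite !ffunE /= mcoeffZ xpair_eqE eq_sym.
  have [->|_] := eqVneq b1 sg; last by rewrite mcoeff0 mulr0.
  by rewrite mcoeffX eq_sym; case: eqP => [->|_]; rewrite ?mulr1 ?mulr0.
rewrite (eq_bigr _ (fun b _ => coef_b b)).
have [inB|ninB] := boolP ((sg, m) \in B).
  by rewrite (bigD1_seq (sg, m)) //= eqxx big1 ?addr0 // => b /negbTE ->.
rewrite big1_seq => [|b /andP [_ bB]]; last by case: eqP bB => // ->; rewrite (negbTE ninB).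
by rewrite memN_msupp_eq0 //; apply: contra ninB; apply: suppB.
Qed.

Lemma map_ds_monomial (T T' : comNzRingType) (phi : {rmorphism T -> T'}) r k b :
  mapDS phi (ds_monomial T (r := r) (k := k) b) = ds_monomial T' b.
Proof.
by apply/ffunP => sg; rewrite !ffunE; case: ifP => _; rewrite ?map_mpolyX ?raddf0.
Qed.

Section TensorRelations.
Variables (r : nat) (T T' : comNzRingType) (phi : {rmorphism T -> T'}).
Variable s : seq ('rV[int]_r * int).
Notation F := (DS r T (size s)).
Variable M : F -> Prop.
Hypotheses (M0 : M 0) (MD : forall m m', M m -> M m' -> M (m + m')).
Hypothesis MZ : forall a m, M m -> M (a *: m).

(* [tensor_zero phi M t] is [rel_span (fcoef t)]. *)
Definition rel_span (f : F -> T') := exists rels : seq (T' * seq (F * T')),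
  (forall q, q \in rels -> is_rel phi M q.2) /\ forall x, f x = \sum_(q <- rels) q.1 * fcoef q.2 x.

Lemma fcoefE (t : seq (F * T')) x : fcoef t x = \sum_(p <- t) if p.1 == x then p.2 else 0.
Proof. exact: big_mkcond. Qed.

Lemma rel_span_ext f g : (forall x, f x = g x) -> rel_span f -> rel_span g.
Proof. by move=> fg [rels [Hrels Ef]]; exists rels; split=> // x; rewrite -fg. Qed.

Lemma rel_span_rel c g : is_rel phi M g -> rel_span (fun x => c * fcoef g x).
Proof.
move=> Hg; exists [:: (c, g)]; split; first by move=> q; rewrite inE => /eqP ->.
by move=> x; rewrite big_seq1.
Qed.

Lemma rel_spanD f g : rel_span f -> rel_span g -> rel_span (fun x => f x + g x).
Proof.
move=> [rf [Hf Ef]] [rg [Hg Eg]]; exists (rf ++ rg); split.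
  by move=> q; rewrite mem_cat => /orP [/Hf|/Hg].
by move=> x; rewrite big_cat Ef Eg.
Qed.

Lemma rel_span_sum (I : eqType) (l : seq I) (f : I -> F -> T') :
  (forall i, i \in l -> rel_span (f i)) -> rel_span (fun x => \sum_(i <- l) f i x).
Proof.
elim: l => [|i l IH] Hf; first by exists [::]; split=> // x; rewrite !big_nil.
have Hl : rel_span (fun x => \sum_(j <- l) f j x).
  by apply: IH => j jl; apply: Hf; rewrite inE jl orbT.
by apply: rel_span_ext (rel_spanD (Hf i (mem_head i l)) Hl) => x; rewrite big_cons.
Qed.

Lemma rel_span_lin (I : Type) (l : seq I) (f : I -> T) (g : I -> F) c :
  (forall i, M (g i)) -> rel_span (fun x =>
    fcoef [:: (\sum_(i <- l) f i *: g i, c)] x - fcoef [seq (g i, c * phi (f i)) | i <- l] x).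
Proof.
move=> Mg; elim: l => [|i l IH].
  have rel0 : is_rel phi M (rel_add T' 0 0) by left; exists 0, 0.
  apply: rel_span_ext (rel_span_rel (- c) rel0) => x.
  rewrite /rel_add !fcoefE !big_cons !big_nil /= (_ : DSadd 0 0 = 0); last first.
    by apply/ffunP => sg; rewrite !ffunE addr0.
  by case: (_ == x); ring.
have Msum : M (\sum_(j <- l) f j *: g j).
  by elim: l {IH} => [|j l IHl]; rewrite ?big_nil ?big_cons //; apply/MD/IHl/MZ.
have rel_a : is_rel phi M (rel_add T' (f i *: g i) (\sum_(j <- l) f j *: g j)).
  by left; exists (f i *: g i), (\sum_(j <- l) f j *: g j); split=> //; apply: MZ.
have rel_s : is_rel phi M (rel_scal phi (f i) (g i)) by right; exists (f i), (g i).
apply: rel_span_ext (rel_spanD (rel_spanD (rel_span_rel c rel_a) (rel_span_rel c rel_s)) IH) => x.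
rewrite /rel_add /rel_scal big_cons !fcoefE !big_cons !big_nil /=.
have -> : [ffun sg => f i *: g i sg] = f i *: g i by apply/ffunP => sg; rewrite !ffunE.
have -> : DSadd (f i *: g i) (\sum_(j <- l) f j *: g j) = f i *: g i + \sum_(j <- l) f j *: g j.
  by apply/ffunP => sg; rewrite !ffunE.
by rewrite big_map; do 4!case: (_ == x); ring.
Qed.

End TensorRelations.

Section BaseChangeOfX.
Variables (r : nat) (coroot : 'rV[int]_r -> 'rV[int]_r) (gamma : 'rV[int]_r).
Variables (T T' : comNzRingType) (phi : {rmorphism T -> T'}) (s : seq ('rV[int]_r * int)).
Notation XT R := (@XT r coroot gamma R s).
Notation Xparam := (Xparam coroot gamma s).

Lemma Xparam_lift_seq (t : seq (DS r T (size s) * T')) :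
  (forall p, p \in t -> XT T p.1) -> exists tu, t = [seq (Xparam q.1, q.2) | q <- tu].
Proof.
elim: t => [|p t IH] Ht; first by exists [::].
have [u Hu] := (Xpref_Xparam coroot gamma s p.1).1 (Ht p (mem_head p t)).
have [tu ->] : exists tu, t = [seq (Xparam q.1, q.2) | q <- tu].
  by apply: IH => q qt; apply: Ht; rewrite inE qt orbT.
by exists ((u, p.2) :: tu); rewrite /= -Hu -surjective_pairing.
Qed.

Lemma canon_Xparam (tu : seq (DS r T (size s) * T')) :
  canon phi [seq (Xparam q.1, q.2) | q <- tu] = Xparam (\sum_(q <- tu) q.2 *: mapDS phi q.1).
Proof.
rewrite canonE big_map linear_sum; apply: eq_bigr => q _.
by rewrite linearZ map_Xparam.
Qed.

Lemma XT_submod : [/\ XT T 0, forall m m', XT T m -> XT T m' -> XT T (m + m')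
  & forall a m, XT T m -> XT T (a *: m)].
Proof.
split=> [|m m'|a m].
- by apply/Xpref_Xparam; exists 0; rewrite linear0.
- move=> /Xpref_Xparam [u ->] /Xpref_Xparam [u' ->].
  by apply/Xpref_Xparam; exists (u + u'); rewrite linearD.
- by move=> /Xpref_Xparam [u ->]; apply/Xpref_Xparam; exists (a *: u); rewrite linearZ.
Qed.

Lemma XT_canon_image y :
  XT T' y <-> exists t, (forall p, p \in t -> XT T p.1) /\ y = canon phi t.
Proof.
split=> [/Xpref_Xparam [v ->]|[t [Ht ->]]]; last first.
  by have [tu ->] := Xparam_lift_seq Ht; rewrite canon_Xparam; apply/Xpref_Xparam; eexists.
pose B := undup [seq (sg, m) | sg <- enum {set 'I_(size s)}, m <- msupp (v sg)].
have suppB sg m : m \in msupp (v sg) -> (sg, m) \in B.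
  by move=> vm; rewrite mem_undup; apply/allpairsPdep; exists sg, m; rewrite mem_enum.
exists [seq (Xparam (ds_monomial T b), (v b.1)@_b.2) | b <- B]; split.
  by move=> p /mapP [b _ ->]; apply/Xpref_Xparam; eexists.
rewrite canonE big_map {1}(ds_monomial_expansion (undup_uniq _) suppB) linear_sum.
by apply: eq_bigr => b _; rewrite linearZ map_Xparam map_ds_monomial.
Qed.

Lemma XT_canon_eq0 (t : seq (DS r T (size s) * T')) :
  (forall u : DS r T' (size s), Xparam u = 0 -> u = 0) ->
  (forall p, p \in t -> XT T p.1) -> canon phi t = 0 -> tensor_zero phi (XT T) t.
Proof.
move=> Xparam_inj Ht t0; have [tu Etu] := Xparam_lift_seq Ht.
pose W := \sum_(q <- tu) q.2 *: mapDS phi q.1.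
have W0 : W = 0 by apply: Xparam_inj; rewrite -canon_Xparam -Etu.
(* Expanding the lifts along the monomials turns t into a combination of the vectors
   Xparam (ds_monomial T b) whose coefficients are those of W. *)
pose B := undup (flatten [seq [seq (sg, m) | sg <- enum {set 'I_(size s)}, m <- msupp (q.1 sg)]
                         | q : DS r T (size s) * T' <- tu]).
have suppB q : q \in tu -> forall sg m, m \in msupp (q.1 sg) -> (sg, m) \in B.
  move=> qtu sg m qm; rewrite mem_undup; apply/flattenP.
  exists [seq (sg, m) | sg <- enum {set 'I_(size s)}, m <- msupp (q.1 sg)]; first exact: map_f.
  by apply/allpairsPdep; exists sg, m; rewrite mem_enum.
pose e (b : {set 'I_(size s)} * 'X_{1..r + 1}) := Xparam (ds_monomial T b).
pose c (q : DS r T (size s) * T') (b : {set 'I_(size s)} * 'X_{1..r + 1}) := q.2 * phi ((q.1 b.1)@_b.2).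
have expand q : q \in tu -> rel_span phi (XT T)
    (fun x => fcoef [:: (Xparam q.1, q.2)] x - fcoef [seq (e b, c q b) | b <- B] x).
  move=> qtu; rewrite {1}(ds_monomial_expansion (undup_uniq _) (suppB q qtu)) linear_sum.
  under eq_bigr do rewrite linearZ.
  have [M0 MD MZ] := XT_submod.
  by apply: rel_span_lin => // b; apply/Xpref_Xparam; eexists.
have coef_W b : (W b.1)@_b.2 = \sum_(q <- tu) c q b.
  rewrite /W sum_ffunE raddf_sum; apply: eq_bigr => q _.
  rewrite !ffunE; change ((q.2 *: map_mpoly phi (q.1 b.1))@_b.2 = c q b).
  by rewrite mcoeffZ mcoeff_map_mpoly.
apply: rel_span_ext (rel_span_sum expand) => x.
have fcoef_t : fcoef t x = \sum_(q <- tu) fcoef [:: (Xparam q.1, q.2)] x.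
  by rewrite Etu fcoefE big_map; apply: eq_bigr => q _; rewrite fcoefE big_seq1.
rewrite sumrB fcoef_t.
suff -> : \sum_(q <- tu) fcoef [seq (e b, c q b) | b <- B] x = 0 by rewrite subr0.
rewrite (eq_bigr (fun q => \sum_(b <- B) if e b == x then c q b else 0)); last first.
  by move=> q _; rewrite fcoefE big_map.
rewrite exchange_big big1 //= => b _.
case: (e b == x); last by rewrite big1.
by rewrite -coef_W W0 ffunE mcoeff0.
Qed.

End BaseChangeOfX.

Lemma root_opp r (roots : seq 'rV[int]_r) coroot :
  is_irred_reduced_root_system roots coroot -> {in roots, forall a, - a \in roots}.
Proof.
case=> _ [pair2 [refl_roots _]] a ar; have := refl_roots a a ar ar.
by rewrite /refl pair2 // scaler_nat mulr2n opprD addrA subrr add0r.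
Qed.

Lemma in_Shat_root r (roots simple : seq 'rV[int]_r) gamma p :
  is_base roots simple -> is_highest_root roots simple gamma ->
  in_Shat simple gamma p -> p.1 \in roots.
Proof.
case=> /allP simple_roots _ _ _ [[gamma_root _] _].
by case/orP => [/andP [_ /simple_roots] | /eqP ->].
Qed.

Lemma simple_aff_root_Shat r (simple : seq 'rV[int]_r) gamma p : in_Shat simple gamma p ->
  simple_aff_root gamma p = p \/ simple_aff_root gamma p = - p.
Proof.
rewrite /simple_aff_root; case/orP => [/andP [/eqP p2 _] | /eqP ->]; last by rewrite eqxx; right.
left; case: p p2 => a n /= ->.
by case: eqP => // /(congr1 snd) /eqP.
Qed.

Lemma saff_self r coroot (p : 'rV[int]_r * int) :
  pairing p.1 (coroot p.1) = 2 -> saff coroot p p = - p.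
Proof.
move=> pair2; rewrite /saff pair2 scaler_nat mulr2n.
by case: p pair2 => a n _ /=; congr pair; [rewrite opprD addrA subrr add0r | ring].
Qed.

Theorem lemma6p4 (r : nat) (roots : seq 'rV[int]_r)
  (coroot : 'rV[int]_r -> 'rV[int]_r) (simple : seq 'rV[int]_r)
  (gamma : 'rV[int]_r)
  (HR : is_irred_reduced_root_system roots coroot)
  (HPi : is_base roots simple)
  (Hgamma : is_highest_root roots simple gamma)
  (T T' : idomainType) (phi : {rmorphism T -> T'})
  (H2 : two_nzd T) (H2' : two_nzd T')
  (Haff : aff_roots_nonzero roots T) (Haff' : aff_roots_nonzero roots T')
  (s : seq ('rV[int]_r * int))
  (Hs : all (in_Shat simple gamma) s) :
  (* image of X_T(s) (x)_T T' is X_T'(s) *)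
  (forall y, @XT r coroot gamma T' s y <->
     exists t : seq (DS r T (size s) * T'),
       (forall p, p \in t -> @XT r coroot gamma T s p.1) /\
       y = @canon r T T' phi s t) /\
  (* and X_T(s) (x)_T T' -> (+) S_T' is injective *)
  (forall t : seq (DS r T (size s) * T'),
     (forall p, p \in t -> @XT r coroot gamma T s p.1) ->
     @canon r T T' phi s t = 0 ->
     @tensor_zero r T T' phi s (@XT r coroot gamma T s) t).
Proof.
have [_ [pair2 [refl_roots _]]] := HR.
have s_roots p : p \in s -> p.1 \in roots by move/(allP Hs); apply: in_Shat_root.
have sar_pm p : p \in s -> simple_aff_root gamma p = p \/ simple_aff_root gamma p = - p.
  by move/(allP Hs); apply: simple_aff_root_Shat.
have sar_roots p : p \in s -> (simple_aff_root gamma p).1 \in roots.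
  by move=> ps; case: (sar_pm p ps) => -> /=; [exact: s_roots ps | exact: root_opp HR _ (s_roots p ps)].
have saff_sar p : p \in s -> saff coroot p (simple_aff_root gamma p) = - simple_aff_root gamma p.
  by move=> ps; case: (sar_pm p ps) => ->; rewrite ?saffN saff_self ?opprK // pair2 // s_roots.
split=> [y | t Ht t0]; first exact: XT_canon_image.
apply: XT_canon_eq0 Ht t0 => u.
exact: Xparam_eq0 s_roots refl_roots sar_roots saff_sar Haff' H2' _ u (leqnn _).
Qed.
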